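(* Let $\mathcal{C}=\{x\mapsto x_i: i\in[n]\}$ be the class of monotone dictators on $\{0,1\}^n$. There exists a distribution $D$ on $\{0,1\}^n$ and a target concept $c\in\mathcal{C}$ such that 1-robustly learning $(c,D)$ requires at most one query to the 1-local equivalence query oracle, but, for any learning algorithm, at least $\log n$ queries to the equivalence query oracle.
   Context: $B_r(x)$ is the Hamming ball of radius $r$ around $x$. The 1-robust risk is $\mathsf{R}_1(h,c)=\Pr_{x\sim D}[\exists z\in B_1(x):h(z)\ne c(z)]$; 1-robustly learning $(c,D)$ means outputting a hypothesis with small 1-robust risk (here, since $D$ may be concentrated on a point, this may require agreeing with $c$ on a Hamming ball). The learner has access to the example oracle returning $(x,c(x))$, $x\sim D$. Given a sample $S$, the 1-local equivalence query oracle, queried with $(h,x)$ for $x\in S$, either confirms that $h$ and $c$ agree on $B_1(x)$ or returns $z\in B_1(x)$ with $h(z)\ne c(z)$. The equivalence query oracle, queried with any hypothesis $h:\{0,1\}^n\to\{0,1\}$, either confirms $h=c$ on all of $\{0,1\}^n$ or returns some $z$ with $h(z)\ne c(z)$; the oracle may choose counterexamples adaptively and adversarially, subject only to the sequence of counterexamples remaining consistent with some concept in $\mathcal{C}$ (and with the labels on the support of $D$). Learners are allowed to output hypotheses outside $\mathcal{C}$. *)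

From mathcomp Require Import all_boot all_order all_algebra.
Set Implicit Arguments. Unset Strict Implicit. Unset Printing Implicit Defensive.
Import Order.TTheory GRing.Theory Num.Theory.
Local Open Scope ring_scope.

Definition pt (n : nat) := {ffun 'I_n -> bool}.

Definition dict (n : nat) (i : 'I_n) : pt n -> bool := fun x => x i.

Definition hamming (n : nat) (x z : pt n) : nat := #|[pred j | x j != z j]|.
Definition ball1 (n : nat) (x : pt n) : pred (pt n) :=
  [pred z | (hamming x z <= 1)%N].

Definition is_distr (R : realFieldType) (n : nat) (D : {ffun pt n -> R}) : Prop :=
  (forall x, 0 <= D x) /\ \sum_x D x = 1.

Definition rrisk (R : realFieldType) (n : nat) (D : {ffun pt n -> R})
    (h c : pt n -> bool) : R :=
  \sum_(x | [exists z, (z \in ball1 x) && (h z != c z)]) D x.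

Definition agrees_on_supp (R : realFieldType) (n : nat) (D : {ffun pt n -> R})
    (c c' : pt n -> bool) : Prop :=
  forall x, 0 < D x -> c' x = c x.

Definition valid_sample (R : realFieldType) (n : nat) (D : {ffun pt n -> R})
    (c : pt n -> bool) (m : nat) (S : seq (pt n * bool)) : Prop :=
  size S = m /\ forall p, p \in S -> 0 < D p.1 /\ p.2 = c p.1.

(* Transcript of oracle answers: None = "confirmed", Some z = counterexample. *)
Definition history (n : nat) := seq (option (pt n)).

(* A (deterministic) learner: chooses a sample size m, receives a labelled
   sample S from the example oracle, then acts as a function of S and of the
   transcript of oracle answers so far. *)
Record learner (n : nat) (A : Type) := Learner {
  lsize : nat;
  lstrat : seq (pt n * bool) -> history n -> A }.

Inductive eq_action (n : nat) :=
| EQAsk of (pt n -> bool)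
| EQStop of (pt n -> bool).

Definition eq_oracle (n : nat) := history n -> (pt n -> bool) -> option (pt n).

Definition valid_eq_oracle (n : nat) (c : pt n -> bool) (O : eq_oracle n) : Prop :=
  forall hist g, match O hist g with
                 | None => forall z, g z = c z
                 | Some z => is_true (g z != c z)
                 end.

Inductive eq_run (n : nat) (L : history n -> eq_action n) (O : eq_oracle n)
  : history n -> nat -> (pt n -> bool) -> Prop :=
| eq_run_stop hist h : L hist = EQStop h -> eq_run L O hist 0 h
| eq_run_ask hist g q h :
    L hist = EQAsk g -> eq_run L O (rcons hist (O hist g)) q h ->
    eq_run L O hist q.+1 h.

Definition eq_robust_learns (R : realFieldType) (n : nat) (D : {ffun pt n -> R})
    (c : pt n -> bool) (eps : R) (L : learner n (eq_action n)) : Prop :=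
  forall (j : 'I_n), agrees_on_supp D c (dict j) ->
  forall S, valid_sample D (dict j) (lsize L) S ->
  forall O, valid_eq_oracle (dict j) O ->
  exists q h, eq_run (lstrat L S) O [::] q h /\ rrisk D h (dict j) <= eps.

Inductive leq_action (n : nat) :=
| LEQAsk of (pt n -> bool) & pt n
| LEQStop of (pt n -> bool).

Definition leq_oracle (n : nat) :=
  history n -> (pt n -> bool) -> pt n -> option (pt n).

Definition valid_leq_oracle (n : nat) (c : pt n -> bool) (O : leq_oracle n) : Prop :=
  forall hist g x, match O hist g x with
                   | None => forall z, z \in ball1 x -> g z = c z
                   | Some z => is_true ((z \in ball1 x) && (g z != c z))
                   end.

Inductive leq_run (n : nat) (S : seq (pt n * bool)) (L : history n -> leq_action n)
    (O : leq_oracle n) : history n -> nat -> (pt n -> bool) -> Prop :=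
| leq_run_stop hist h : L hist = LEQStop h -> leq_run S L O hist 0 h
| leq_run_ask hist g x q h :
    L hist = LEQAsk g x -> x \in [seq p.1 | p <- S] ->
    leq_run S L O (rcons hist (O hist g x)) q h ->
    leq_run S L O hist q.+1 h.

Definition leq_robust_learns_within (R : realFieldType) (n : nat)
    (D : {ffun pt n -> R}) (c : pt n -> bool) (eps : R) (k : nat)
    (L : learner n (leq_action n)) : Prop :=
  forall (j : 'I_n), agrees_on_supp D c (dict j) ->
  forall S, valid_sample D (dict j) (lsize L) S ->
  forall O, valid_leq_oracle (dict j) O ->
  exists q h, leq_run S (lstrat L S) O [::] q h /\ (q <= k)%N /\
              rrisk D h (dict j) <= eps.

From mathcomp Require Import all_boot all_order all_algebra zify.
Import Order.TTheory GRing.Theory Num.Theory.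
Local Open Scope ring_scope.
Set Implicit Arguments. Unset Strict Implicit. Unset Printing Implicit Defensive.

(* Take D to be the point mass at the origin 0.  All dictators agree on 0, and
   a hypothesis has robust risk 0 rather than 1 for x |-> x_j exactly when it
   agrees with x_j on B_1(0), which contains the unit vector e_j.  One 1-local
   query of the constant-false hypothesis at 0 must be answered by e_j, which
   reveals j.  Against equivalence queries, the adversary answers the s-th
   query with the point whose k-th coordinate is bit s of k, fixing bit s of
   the target index so that this point is a counterexample.  After q < log n
   queries bit q of the index is still free, so two dictators are consistent
   with the whole transcript and no output is correct on B_1(0) for both. *)

Fixpoint nat_of_bits (l : seq bool) : nat :=
  if l is b :: l' then (b + 2 * nat_of_bits l')%N else 0%N.

Lemma odd_nat_of_bits l s : odd (nat_of_bits l %/ 2 ^ s) = nth false l s.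
Proof.
elim: l s => [|b l IHl] [|s] /=; rewrite ?div0n ?nth_nil //.
  by rewrite expn0 divn1 oddD oddM addbF; case: b.
rewrite expnS divnMA -IHl; congr (odd (_ %/ _)).
by rewrite addnC mulnC divnMDl // divn_small ?addn0 //; case: b.
Qed.

Lemma nat_of_bits_lt l : (nat_of_bits l < 2 ^ size l)%N.
Proof. by elim: l => [|b l IHl] //=; rewrite expnS; case: b; lia. Qed.

Section Hypercube.
Variable n : nat.

Definition pt0 : pt n := [ffun => false].
Definition unit_pt (j : 'I_n) : pt n := [ffun k => k == j].

Lemma unit_pt_ball1 j : unit_pt j \in ball1 pt0.
Proof.
rewrite inE /hamming (@eq_card _ _ (pred1 j)) ?card1 // => k.
by rewrite !inE /pt0 /unit_pt !ffunE; case: (k == j).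
Qed.

Lemma ball1_pt0_unit y j : y \in ball1 pt0 -> y j -> y = unit_pt j.
Proof.
rewrite inE => /card_le1_eqP y_le1 yj; apply/ffunP => k; rewrite ffunE.
have [->//|/eqP k_neq_j] := eqVneq k j; apply/negP => yk.
by apply: k_neq_j; apply: y_le1; rewrite inE /pt0 ffunE ?yk ?yj.
Qed.

Lemma ball1_pt0_eq_unit y j : y \in ball1 pt0 -> (y == unit_pt j) = y j.
Proof.
move=> y_ball; case yj: (y j); first by rewrite (ball1_pt0_unit y_ball yj) eqxx.
by apply/eqP => y_unit; rewrite y_unit /unit_pt ffunE eqxx in yj.
Qed.

Lemma dict_ball1_inj (h : pt n -> bool) j1 j2 :
  {in ball1 pt0, h =1 dict j1} -> {in ball1 pt0, h =1 dict j2} -> j1 = j2.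
Proof.
move=> h_j1 h_j2; have e_j1 := unit_pt_ball1 j1.
by move: (h_j2 _ e_j1); rewrite h_j1 // /dict /unit_pt !ffunE eqxx => /esym/eqP.
Qed.

End Hypercube.

Section EqRuns.
Variables (n : nat) (L : history n -> eq_action n).

Lemma eq_run_output_unique O hist q1 q2 h1 h2 :
  eq_run L O hist q1 h1 -> eq_run L O hist q2 h2 -> h1 = h2.
Proof.
move=> run1; elim: run1 q2 h2 => {hist q1 h1}
  [hist h1 L_stop|hist g q1 h1 L_ask _ IH] q2 h2 run2.
  by inversion run2; congruence.
inversion run2 as [? ? L_stop|? g' ? ? L_ask' run2']; first by congruence.
have g_eq : g = g' by congruence.
by subst g'; apply: IH run2'.
Qed.

Lemma eq_run_transfer (a : nat -> option (pt n)) (O1 O2 : eq_oracle n) t q h :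
  (forall s g, (s < t + q)%N -> L (mkseq a s) = EQAsk g -> O1 (mkseq a s) g = a s) ->
  (forall s g, (s < t + q)%N -> L (mkseq a s) = EQAsk g -> O2 (mkseq a s) g = a s) ->
  eq_run L O1 (mkseq a t) q h -> eq_run L O2 (mkseq a t) q h.
Proof.
elim: q t => [|q IH] t O1_a O2_a run; inversion run as [? ? L_stop|? g ? ? L_ask run'].
  exact: eq_run_stop.
have t_lt : (t < t + q.+1)%N by rewrite addnS ltnS leq_addr.
rewrite (O1_a t g t_lt L_ask) -mkseqS in run'.
apply: (eq_run_ask L_ask); rewrite (O2_a t g t_lt L_ask) -mkseqS.
by apply: IH run'; rewrite addSnnS.
Qed.

End EqRuns.

Section PointMass.
Variables (R : realFieldType) (n : nat).

Definition point_mass (x : pt n) : {ffun pt n -> R} := [ffun y => (y == x)%:R].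

Lemma point_mass_distr x : is_distr (point_mass x).
Proof.
split=> [y|]; first by rewrite ffunE ler0n.
rewrite (bigD1 x) //= ffunE eqxx big1 ?addr0 // => y /negbTE y_neq_x.
by rewrite ffunE y_neq_x.
Qed.

Lemma point_mass_gt0 x y : 0 < point_mass x y -> y = x.
Proof. by rewrite ffunE; case: eqP => // _; rewrite ltxx. Qed.

Lemma rrisk_point_mass x h c :
  rrisk (point_mass x) h c = [exists z, (z \in ball1 x) && (h z != c z)]%:R.
Proof.
rewrite /rrisk big_mkcond (bigD1 x) //= ffunE eqxx big1 ?addr0; first by case: ifP.
by move=> y /negbTE y_neq_x; rewrite ffunE y_neq_x if_same.
Qed.

Lemma rrisk_point_mass_eq0 x h c :
  {in ball1 x, h =1 c} -> rrisk (point_mass x) h c = 0.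
Proof.
move=> h_c; rewrite rrisk_point_mass; case: existsP => // -[z /andP[z_ball]].
by rewrite h_c ?eqxx.
Qed.

Lemma rrisk_point_mass_lt1 x h c :
  rrisk (point_mass x) h c < 1 -> {in ball1 x, h =1 c}.
Proof.
rewrite rrisk_point_mass => risk_lt1 z z_ball; apply/eqP/negPn/negP => hz.
suff : [exists z, (z \in ball1 x) && (h z != c z)].
  by move=> ex; rewrite ex ltxx in risk_lt1.
by apply/existsP; exists z; rewrite z_ball.
Qed.

Lemma dict_agrees_pt0 i j : agrees_on_supp (point_mass (pt0 n)) (dict i) (dict j).
Proof. by move=> x /point_mass_gt0 ->; rewrite /dict !ffunE. Qed.

Lemma valid_sample_pt0 j m :
  valid_sample (point_mass (pt0 n)) (dict j) m (nseq m (pt0 n, false)).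
Proof.
split=> [|p /nseqP[-> _]]; first exact: size_nseq.
by rewrite /= /dict !ffunE eqxx ltr01.
Qed.

(* The [None] branch is unreachable: no valid oracle confirms the
   constant-false hypothesis on B_1(0). *)
Definition ball1_learner : learner n (leq_action n) :=
  Learner 1 (fun S hist => match hist with
    | [::] => LEQAsk (fun _ => false) (head (pt0 n) [seq p.1 | p <- S])
    | Some z :: _ => LEQStop (fun y => y == z)
    | None :: _ => LEQStop (fun _ => false)
    end).

Lemma ball1_learner_learns i :
  leq_robust_learns_within (point_mass (pt0 n)) (dict i) 0 1 ball1_learner.
Proof.
move=> j _ S [S_size S_valid] O O_valid.
have [p S_p] : exists p, S = [:: p] by case: S {S_valid} S_size => [|p []] // _; exists p.
subst S.
have [/point_mass_gt0 p_pt0 _] := S_valid p (mem_head _ _).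
have := O_valid [::] (fun _ => false) (pt0 n).
case O_ans: (O _ _ _) => [z|] O_spec; last first.
  by move: (O_spec _ (unit_pt_ball1 j)); rewrite /dict ffunE eqxx.
have /andP[z_ball zj] := O_spec; rewrite /dict eq_sym eqbF_neg negbK in zj.
exists 1%N, (fun y => y == z); split; last split=> //.
  apply: (@leq_run_ask _ _ _ _ _ (fun _ => false) (pt0 n)); rewrite /= p_pt0 //.
    by rewrite inE.
  by rewrite O_ans; apply: leq_run_stop.
apply/eqP; rewrite eq_le rrisk_point_mass_eq0 ?lexx // => y y_ball.
by rewrite (ball1_pt0_unit z_ball zj) ball1_pt0_eq_unit.
Qed.

Lemma eq_learner_correct_on_ball1 eps (L : learner n (eq_action n)) i j S O q h :
  eps < 1 -> eq_robust_learns (point_mass (pt0 n)) (dict i) eps L ->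
  valid_sample (point_mass (pt0 n)) (dict j) (lsize L) S ->
  valid_eq_oracle (dict j) O -> eq_run (lstrat L S) O [::] q h ->
  {in ball1 (pt0 n), h =1 dict j}.
Proof.
move=> eps_lt1 L_learns S_valid O_valid run.
have [q' [h' [run' risk_le]]] := L_learns j (dict_agrees_pt0 i j) S S_valid O O_valid.
rewrite (eq_run_output_unique run run'); apply: rrisk_point_mass_lt1.
exact: le_lt_trans risk_le eps_lt1.
Qed.

End PointMass.

Section BitAdversary.
Variable n : nat.

Definition bit_pt (s : nat) : pt n := [ffun k : 'I_n => odd (k %/ 2 ^ s)].
Definition bit_answers (s : nat) : option (pt n) := Some (bit_pt s).

Definition bit_oracle (j : 'I_n) : eq_oracle n := fun hist g =>
  let z := bit_pt (size hist) in
  if g z != z j then Some z else [pick y | g y != dict j y].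

Lemma bit_oracle_valid j : valid_eq_oracle (dict j) (bit_oracle j).
Proof.
move=> hist g; rewrite /bit_oracle; case: ifP => // _.
by case: pickP => // no_cex z; apply/eqP/negbFE/no_cex.
Qed.

Lemma bit_oracle_answer j s g :
  bit_pt s j = ~~ g (bit_pt s) -> bit_oracle j (mkseq bit_answers s) g = bit_answers s.
Proof. by move=> bit_j; rewrite /bit_oracle size_mkseq bit_j; case: (g _). Qed.

Hypothesis n_gt0 : (0 < n)%N.

Lemma nat_of_bits_log_lt (f : nat -> bool) :
  (nat_of_bits (mkseq f (trunc_log 2 n)) < n)%N.
Proof. by apply: leq_trans (nat_of_bits_lt _) _; rewrite size_mkseq trunc_logP. Qed.

Definition idx_of_bits (f : nat -> bool) : 'I_n := Ordinal (nat_of_bits_log_lt f).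

Lemma bit_pt_idx_of_bits f s : (s < trunc_log 2 n)%N -> bit_pt s (idx_of_bits f) = f s.
Proof. by move=> s_lt; rewrite ffunE odd_nat_of_bits nth_mkseq. Qed.

Definition adversary_bits (L : history n -> eq_action n) (s : nat) : bool :=
  if L (mkseq bit_answers s) is EQAsk g then ~~ g (bit_pt s) else false.

Lemma bit_oracle_follows L f q s g :
  (q <= trunc_log 2 n)%N -> (forall s, (s < q)%N -> f s = adversary_bits L s) ->
  (s < q)%N -> L (mkseq bit_answers s) = EQAsk g ->
  bit_oracle (idx_of_bits f) (mkseq bit_answers s) g = bit_answers s.
Proof.
move=> q_le f_adv s_lt L_ask; apply: bit_oracle_answer.
rewrite bit_pt_idx_of_bits; last exact: leq_trans s_lt q_le.
by rewrite f_adv // /adversary_bits L_ask.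
Qed.

(* Flipping bit q of the adversary's index leaves the first q answers unchanged. *)
Lemma adversary_fools L q h : (q < trunc_log 2 n)%N ->
  eq_run L (bit_oracle (idx_of_bits (adversary_bits L))) [::] q h ->
  exists2 j, j != idx_of_bits (adversary_bits L) & eq_run L (bit_oracle j) [::] q h.
Proof.
move=> q_lt run; set b := adversary_bits L.
pose b' s := if s == q then ~~ b s else b s.
exists (idx_of_bits b').
  apply/eqP => /(congr1 (fun j => bit_pt q j)).
  by rewrite !bit_pt_idx_of_bits // /b' eqxx; case: (b q).
apply: (eq_run_transfer (a := bit_answers) (t := 0) _ _ run) => s g s_lt L_ask.
  by apply: (bit_oracle_follows (L := L) (q := q)) => //; apply: ltnW.
apply: (bit_oracle_follows (L := L) (q := q)) => // [|s' s'_lt]; first exact: ltnW.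
by rewrite /b' ltn_eqF.
Qed.

End BitAdversary.

Theorem theorem6p13 (R : realFieldType) (n : nat) (hn : (0 < n)%N) :
  exists (D : {ffun pt n -> R}) (i : 'I_n),
    is_distr D /\
    (exists L : learner n (leq_action n),
        leq_robust_learns_within D (dict i) 0 1 L) /\
    (forall eps : R, eps < 1 ->
     forall L : learner n (eq_action n), eq_robust_learns D (dict i) eps L ->
     exists (j : 'I_n), agrees_on_supp D (dict i) (dict j) /\
     exists S, valid_sample D (dict j) (lsize L) S /\
     exists O, valid_eq_oracle (dict j) O /\
     forall q h, eq_run (lstrat L S) O [::] q h -> (trunc_log 2 n <= q)%N).
Proof.
exists (point_mass R (pt0 n)), (Ordinal hn); split; first exact: point_mass_distr.
split; first by exists (ball1_learner n); apply: ball1_learner_learns.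
move=> eps eps_lt1 L L_learns.
set S := nseq (lsize L) (pt0 n, false).
set j1 := idx_of_bits hn (adversary_bits (lstrat L S)).
exists j1; split; first exact: dict_agrees_pt0.
have S_valid j : valid_sample (point_mass R (pt0 n)) (dict j) (lsize L) S.
  exact: valid_sample_pt0.
exists S; split; first exact: S_valid.
exists (bit_oracle j1); split; first exact: bit_oracle_valid.
move=> q h run; rewrite leqNgt; apply/negP => q_lt.
have [j2 j2_neq run2] := adversary_fools q_lt run.
have h_correct := eq_learner_correct_on_ball1 eps_lt1 L_learns (S_valid _)
  (bit_oracle_valid _).
have j2_eq := dict_ball1_inj (h_correct _ _ _ run2) (h_correct _ _ _ run).
by rewrite j2_eq eqxx in j2_neq.
Qed.
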